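(* For every bounded distributive lattice $L$, the set of prime ideals of $\Phi(L)$ is $$\mathcal{I}_p(\Phi(L))=\{(I\times I)\cap \Phi(L): I\in \mathcal{I}_p(L)\}\cup\{(I\times L)\cap\Phi(L): I\in\mathcal{I}_p(L)\}.$$
   Context: All lattices are bounded distributive with $0\neq 1$. For a lattice $L$, $\Phi(L)=\{(a,b)\in L\times L : a\le b\}$, ordered coordinatewise; it is a $(0,1)$-sublattice of $L\times L$. $\mathcal{I}_p(L)$ denotes the set of prime ideals of $L$ (ideals $I\neq L$ such that $a,b\notin I$ implies $a\wedge b\notin I$). *)

From HB Require Import structures.
From mathcomp Require Import all_boot all_order.
Set Implicit Arguments. Unset Strict Implicit. Unset Printing Implicit Defensive.
Import Order.Theory.
Local Open Scope order_scope.

Definition is_ideal d (T : latticeType d) (I : T -> Prop) : Prop :=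
  (exists x, I x) /\
  (forall x y, I y -> x <= y -> I x) /\
  (forall x y, I x -> I y -> I (x `|` y)).

Definition is_prime_ideal d (T : latticeType d) (I : T -> Prop) : Prop :=
  is_ideal I /\ (exists x, ~ I x) /\
  (forall a b, ~ I a -> ~ I b -> ~ I (a `&` b)).

(* Phi(L) = {(a,b) in L x L : a <= b}, as a (0,1)-sublattice of the product
   lattice L x L (coordinatewise order). *)
Section Phi.
Context {d : Order.disp_t} (L : tbDistrLatticeType d).

Definition LL := (L *p L)%type.

Definition phi_pred : pred LL := fun x => x.1 <= x.2.

Record Phi := MkPhi { phi_val : LL; phi_valP : phi_pred phi_val }.

HB.instance Definition _ := [isSub for phi_val].
HB.instance Definition _ := [Choice of Phi by <:].

Lemma phi_meet_closed : meet_closed phi_pred.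
Proof.
move=> [a1 a2] [b1 b2]; rewrite !unfold_in /phi_pred /= => h1 h2.
rewrite lexI; apply/andP; split.
- by apply: le_trans h1; exact: leIl.
- by apply: le_trans h2; exact: leIr.
Qed.

Lemma phi_join_closed : join_closed phi_pred.
Proof.
move=> [a1 a2] [b1 b2]; rewrite !unfold_in /phi_pred /= => h1 h2.
rewrite leUx; apply/andP; split.
- exact: (le_trans h1 (leUl _ _)).
- exact: (le_trans h2 (leUr _ _)).
Qed.

Lemma phi_bot : \bot \in phi_pred.
Proof. by rewrite unfold_in /phi_pred /=. Qed.

Lemma phi_top : \top \in phi_pred.
Proof. by rewrite unfold_in /phi_pred /=. Qed.

HB.instance Definition _ :=
  Order.SubChoice_isTBSubLattice.Build _ LL phi_pred
    (Order.prod_display d d) Phi phi_meet_closed phi_join_closed phi_bot phi_top.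

End Phi.

Arguments phi_val {d L}.

From HB Require Import structures.
From mathcomp Require Import all_boot all_order.
From Stdlib Require Import Classical.
Import Order.Theory.
Local Open Scope order_scope.

(* (<-) (I x L) ∩ Phi(L) and (I x I) ∩ Phi(L) are the preimages of I along
        the projections (a, b) |-> a and (a, b) |-> b (for the second one,
        I b already forces I a since a <= b).
   (->) Let P be a prime ideal of Phi(L) and e = (bot, top).  If e lies in
        P then P is determined by first coordinates: (a, b) is in P iff
        (a, top) is, and I a := P (a, top) is prime.  Otherwise primality
        applied to (b, b) /\ e <= (a, b) shows that (a, b) is in P iff
        (b, b) is, and I a := P (a, a) is prime. *)

Section IdealFacts.
Context {d : Order.disp_t} {T : latticeType d}.

Lemma prime_ideal_ext {P Q : T -> Prop} :
  (forall x, P x <-> Q x) -> is_prime_ideal Q -> is_prime_ideal P.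
Proof.
move=> PQ [[[z Qz] [Qdown Qjoin]] [[w nQw] Qprime]].
split; [split; [|split] | split].
- by exists z; apply/PQ.
- by move=> x y /PQ Qy xy; apply/PQ; exact: Qdown Qy xy.
- by move=> x y /PQ Qx /PQ Qy; apply/PQ; exact: Qjoin.
- by exists w => /PQ.
- by move=> a b nPa nPb /PQ; apply: Qprime => /PQ.
Qed.

Lemma ideal_down {I : T -> Prop} {x y : T} : is_ideal I -> I y -> x <= y -> I x.
Proof. by move=> [_ [Idown _]]; exact: Idown. Qed.

Lemma prime_ideal_meet (P : T -> Prop) a b :
  is_prime_ideal P -> P (a `&` b) -> ~ P b -> P a.
Proof.
move=> [_ [_ Pprime]] Pab nPb; apply: NNPP => nPa.
exact: Pprime nPa nPb Pab.
Qed.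

Lemma prime_ideal_preimage {d' : Order.disp_t} {M : latticeType d'}
    {f : T -> M} {P : M -> Prop} :
  {morph f : x y / x `&` y} -> {morph f : x y / x `|` y} ->
  is_prime_ideal P -> (exists x, P (f x)) -> (exists y, ~ P (f y)) ->
  is_prime_ideal (fun x => P (f x)).
Proof.
move=> fI fU [[_ [Pdown Pjoin]] [_ Pprime]] Pf nPf.
split; [split; [|split] | split] => //.
- move=> x y Pfy /meet_idPl xy; apply: Pdown Pfy _.
  by rewrite -xy fI leIr.
- by move=> x y Pfx Pfy; rewrite fU; exact: Pjoin.
- by move=> a b nPfa nPfb; rewrite fI; exact: Pprime.
Qed.

End IdealFacts.

Section BoundedIdealFacts.
Context {d : Order.disp_t} {T : tbLatticeType d}.

Lemma ideal_bot (I : T -> Prop) : is_ideal I -> I \bot.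
Proof.
move=> Iideal; case: (Iideal) => [[z Iz] _].
exact: ideal_down Iideal Iz (le0x z).
Qed.

Lemma prime_ideal_top (I : T -> Prop) : is_prime_ideal I -> ~ I \top.
Proof.
move=> [Iideal [[z nIz] _]] It; apply: nIz.
exact: ideal_down Iideal It (lex1 z).
Qed.

End BoundedIdealFacts.

Section PhiHomomorphisms.
Context {d : Order.disp_t} {L : tbDistrLatticeType d}.
Implicit Types (a b : L) (x y : Phi L).

Lemma phi_valI x y :
  phi_val (x `&` y) =
  ((phi_val x).1 `&` (phi_val y).1, (phi_val x).2 `&` (phi_val y).2).
Proof. by []. Qed.

Lemma phi_valU x y :
  phi_val (x `|` y) =
  ((phi_val x).1 `|` (phi_val y).1, (phi_val x).2 `|` (phi_val y).2).
Proof. by []. Qed.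

Lemma phi_leE x y :
  (x <= y) =
  ((phi_val x).1 <= (phi_val y).1) && ((phi_val x).2 <= (phi_val y).2).
Proof. by []. Qed.

Lemma phi_le12 x : (phi_val x).1 <= (phi_val x).2.
Proof. exact: phi_valP. Qed.

Definition phi_diag a : Phi L := MkPhi (lexx a : phi_pred (a, a)).
Definition phi_upto a : Phi L := MkPhi (lex1 a : phi_pred (a, \top)).

Lemma phi_diagI : {morph phi_diag : a b / a `&` b}.
Proof. by move=> a b; apply: val_inj. Qed.

Lemma phi_diagU : {morph phi_diag : a b / a `|` b}.
Proof. by move=> a b; apply: val_inj. Qed.

Lemma phi_diag0 : phi_diag \bot = \bot :> Phi L.
Proof. exact: val_inj. Qed.

Lemma phi_uptoI : {morph phi_upto : a b / a `&` b}.
Proof. by move=> a b; apply: val_inj; rewrite [RHS]phi_valI /= meetxx. Qed.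

Lemma phi_uptoU : {morph phi_upto : a b / a `|` b}.
Proof. by move=> a b; apply: val_inj; rewrite [RHS]phi_valU /= joinxx. Qed.

Lemma phi_fstI : {morph (fun x => (phi_val x).1) : x y / x `&` y}.
Proof. by []. Qed.

Lemma phi_fstU : {morph (fun x => (phi_val x).1) : x y / x `|` y}.
Proof. by []. Qed.

Lemma phi_sndI : {morph (fun x => (phi_val x).2) : x y / x `&` y}.
Proof. by []. Qed.

Lemma phi_sndU : {morph (fun x => (phi_val x).2) : x y / x `|` y}.
Proof. by []. Qed.

Lemma prime_ideal_phi_fst {I : L -> Prop} :
  is_prime_ideal I -> is_prime_ideal (fun x : Phi L => I (phi_val x).1).
Proof.
move=> Iprime; apply: (prime_ideal_preimage phi_fstI phi_fstU Iprime).
- by exists \bot; exact: ideal_bot (proj1 Iprime).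
- by exists \top; exact: prime_ideal_top Iprime.
Qed.

Lemma prime_ideal_phi_snd {I : L -> Prop} :
  is_prime_ideal I -> is_prime_ideal (fun x : Phi L => I (phi_val x).2).
Proof.
move=> Iprime; apply: (prime_ideal_preimage phi_sndI phi_sndU Iprime).
- by exists \bot; exact: ideal_bot (proj1 Iprime).
- by exists \top; exact: prime_ideal_top Iprime.
Qed.

End PhiHomomorphisms.

Section PrimeIdealsOfPhi.
Context {d : Order.disp_t} {L : tbDistrLatticeType d}.
Variable P : Phi L -> Prop.
Hypothesis Pprime : is_prime_ideal P.

Lemma phi_ideal_upto :
  P (phi_upto \bot) -> forall x, P x <-> P (phi_upto (phi_val x).1).
Proof.
move: Pprime => [[_ [_ Pjoin]] _] Pe x; split => [Px | Pupto].
- have -> : phi_upto (phi_val x).1 = x `|` phi_upto \bot.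
    by apply: val_inj; rewrite [RHS]phi_valU /= joinx0 joinx1.
  exact: Pjoin.
- by apply: (ideal_down (proj1 Pprime)) Pupto _; rewrite phi_leE /= lexx lex1.
Qed.

(* If e is not in P, then (a, b) is in P iff (b, b) is, because
   (b, b) /\ e = (bot, b) <= (a, b); in particular (a, a) is then in P too. *)
Lemma phi_ideal_diag : ~ P (phi_upto \bot) ->
  forall x, P x <-> P (phi_diag (phi_val x).1) /\ P (phi_diag (phi_val x).2).
Proof.
move=> nPe x; have x12 := phi_le12 x.
have P2 : P (phi_diag (phi_val x).2) -> P x.
  move=> Pdiag; apply: (ideal_down (proj1 Pprime)) Pdiag _.
  by rewrite phi_leE /= lexx andbT.
have P12 : P (phi_diag (phi_val x).2) -> P (phi_diag (phi_val x).1).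
  move=> Pdiag; apply: (ideal_down (proj1 Pprime)) Pdiag _.
  by rewrite phi_leE /= x12.
split=> [Px | [_ Pdiag]]; last exact: P2.
suff Pdiag : P (phi_diag (phi_val x).2) by split; [exact: P12|].
apply: prime_ideal_meet Pprime _ nPe; apply: (ideal_down (proj1 Pprime)) Px _.
by rewrite phi_leE /= meetx0 meetx1 le0x lexx.
Qed.

Lemma prime_ideal_phi_upto :
  P (phi_upto \bot) -> is_prime_ideal (fun a => P (phi_upto a)).
Proof.
move=> Pe; apply: (prime_ideal_preimage phi_uptoI phi_uptoU Pprime).
- by exists \bot.
- move: Pprime => [_ [[w nPw] _]]; exists (phi_val w).1.
  by move/(phi_ideal_upto Pe w).
Qed.

Lemma prime_ideal_phi_diag : is_prime_ideal (fun a => P (phi_diag a)).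
Proof.
apply: (prime_ideal_preimage phi_diagI phi_diagU Pprime).
- by exists \bot; rewrite phi_diag0; exact: ideal_bot (proj1 Pprime).
- move: Pprime => [_ [[w nPw] _]]; exists (phi_val w).2 => Pdiag; apply: nPw.
  apply: (ideal_down (proj1 Pprime)) Pdiag _.
  by rewrite phi_leE /= phi_le12 lexx.
Qed.

End PrimeIdealsOfPhi.

Theorem mainTheorem4 (d : Order.disp_t) (L : tbDistrLatticeType d)
    (hL : \bot != \top :> L) (P : Phi L -> Prop) :
  is_prime_ideal P <->
  exists I : L -> Prop, is_prime_ideal I /\
    ((forall x : Phi L, P x <-> (I (phi_val x).1 /\ I (phi_val x).2)) \/
     (forall x : Phi L, P x <-> I (phi_val x).1)).
Proof.
split=> [Pprime | [I [Iprime [PI | PI]]]].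
- case: (classic (P (phi_upto \bot))) => [Pe | nPe].
  + exists (fun a => P (phi_upto a)); split; first exact: prime_ideal_phi_upto.
    by right; exact: phi_ideal_upto.
  + exists (fun a => P (phi_diag a)); split; first exact: prime_ideal_phi_diag.
    by left; exact: phi_ideal_diag.
- apply: prime_ideal_ext (prime_ideal_phi_snd Iprime) => x.
  rewrite PI; split=> [[] // | I2]; split=> //.
  exact: ideal_down (proj1 Iprime) I2 (phi_le12 x).
- exact: prime_ideal_ext PI (prime_ideal_phi_fst Iprime).
Qed.
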